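(* Let $X$ be a set and let $A$ and $B$ be Banach algebras of complex-valued functions on $X$ (with pointwise operations), each containing the constant functions on $X$. Let $\psi:A\to B$ be a continuous algebra homomorphism and $\varphi\in\Delta(B)$. Let $F$ be the linear span of the set of all $f\in A$ such that $P(f)=0$ for some nonzero polynomial $P$ in one complex variable. If $F$ is dense in $A$ (in the norm of $A$), then every $(\varphi,\psi)$-point derivation on $A$ is zero, i.e. $\mathfrak{D}_{(\varphi,\psi)}=\{0\}$.
   Context: $\Delta(B)$ denotes the set of all nonzero multiplicative linear functionals on $B$. A bounded linear functional $D$ on $A$ is a $(\varphi,\psi)$-point derivation if $D(ab)=\varphi(\psi(a))\,D(b)+\varphi(\psi(b))\,D(a)$ for all $a,b\in A$; $\mathfrak{D}_{(\varphi,\psi)}$ is the set of all of them. *)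

From mathcomp Require Import all_boot all_order all_algebra.
From mathcomp Require Import complex.
From mathcomp Require Import reals.
Set Implicit Arguments. Unset Strict Implicit. Unset Printing Implicit Defensive.
Import Order.TTheory GRing.Theory Num.Theory.
Local Open Scope ring_scope.

Notation cmod := (@Normc.normc _).

Section FunBanach.
Variables (R : realType) (X : Type).
Local Notation C := (R[i]).
Local Notation FX := (X -> C).

Definition fadd (f g : FX) : FX := fun x => f x + g x.
Definition fsub (f g : FX) : FX := fun x => f x - g x.
Definition fmul (f g : FX) : FX := fun x => f x * g x.
Definition fscale (c : C) (f : FX) : FX := fun x => c * f x.
Definition fcst (c : C) : FX := fun _ => c.

(* (S, N) is a Banach algebra of complex-valued functions on X, with pointwise
   operations, containing the constant functions: S is the carrier (a set of
   functions), N the norm (only its values on S matter). *)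
Definition fun_banach_algebra (S : FX -> Prop) (N : FX -> R) : Prop :=
  (forall c, S (fcst c)) /\
      (forall f g, S f -> S g -> S (fadd f g)) /\
      (forall c f, S f -> S (fscale c f)) /\
      (forall f g, S f -> S g -> S (fmul f g)) /\
      (forall f, S f -> 0 <= N f) /\
      (forall f, S f -> N f = 0 -> f = fcst 0) /\
      (forall c f, S f -> N (fscale c f) = cmod c * N f) /\
      (forall f g, S f -> S g -> N (fadd f g) <= N f + N g) /\
      (forall f g, S f -> S g -> N (fmul f g) <= N f * N g)/\
      (forall u : nat -> FX, (forall n, S (u n)) ->
        (forall e : R, 0 < e -> exists n0, forall m n, (n0 <= m)%N -> (n0 <= n)%N ->
            N (fsub (u m) (u n)) < e) ->
        exists l, S l /\ forall e : R, 0 < e -> exists n0, forall n, (n0 <= n)%N ->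
            N (fsub (u n) l) < e).

Definition alg_hom (SA SB : FX -> Prop) (psi : FX -> FX) : Prop :=
  [/\ (forall f, SA f -> SB (psi f)),
      (forall f g, SA f -> SA g -> psi (fadd f g) = fadd (psi f) (psi g)),
      (forall c f, SA f -> psi (fscale c f) = fscale c (psi f)) &
      (forall f g, SA f -> SA g -> psi (fmul f g) = fmul (psi f) (psi g))].

Definition continuous_on_fa (SA : FX -> Prop) (NA NB : FX -> R) (psi : FX -> FX) :=
  forall f, SA f -> forall e : R, 0 < e -> exists2 d : R, 0 < d &
    forall g, SA g -> NA (fsub g f) < d -> NB (fsub (psi g) (psi f)) < e.

Definition lin_functional (S : FX -> Prop) (L : FX -> C) : Prop :=
  (forall f g, S f -> S g -> L (fadd f g) = L f + L g) /\
  (forall c f, S f -> L (fscale c f) = c * L f).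

Definition bounded_lin_functional (S : FX -> Prop) (N : FX -> R) (L : FX -> C) :=
  lin_functional S L /\ exists M : R, forall f, S f -> cmod (L f) <= M * N f.

Definition in_Delta (S : FX -> Prop) (phi : FX -> C) : Prop :=
  [/\ lin_functional S phi,
      (forall f g, S f -> S g -> phi (fmul f g) = phi f * phi g) &
      exists2 f, S f & phi f != 0].

Definition point_derivation (SA : FX -> Prop) (NA : FX -> R)
    (phi : FX -> C) (psi : FX -> FX) (D : FX -> C) : Prop :=
  bounded_lin_functional SA NA D /\
  forall a b, SA a -> SA b ->
    D (fmul a b) = phi (psi a) * D b + phi (psi b) * D a.

Definition poly_annihilated (f : FX) : Prop :=
  exists2 P : {poly C}, P != 0 & forall x, P.[f x] = 0.

Definition in_alg_span (SA : FX -> Prop) (h : FX) : Prop :=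
  exists n (c : 'I_n -> C) (g : 'I_n -> FX),
    (forall i, SA (g i) /\ poly_annihilated (g i)) /\
    h = fun x => \sum_(i < n) c i * g i x.

Definition dense_in (SA F : FX -> Prop) (NA : FX -> R) : Prop :=
  forall f, SA f -> forall e : R, 0 < e -> exists2 h, F h & NA (fsub f h) < e.

End FunBanach.

From mathcomp Require Import all_boot all_order all_algebra.
From mathcomp Require Import complex.
From mathcomp Require Import reals.
From Stdlib Require Import FunctionalExtensionality.
Set Implicit Arguments. Unset Strict Implicit. Unset Printing Implicit Defensive.
Import Order.TTheory GRing.Theory Num.Theory.
Local Open Scope ring_scope.

(* Write chi := phi \o psi, a multiplicative linear functional on A, and let D be
   a chi-derivation.  Either chi(1) = 0, and then chi = 0 and D = 0, or chi(1) = 1,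
   and then D(p(g)) = p'(chi g) D g for every polynomial p.  If P(g) = 0 with
   P = Q (X - chi g)^m and Q(chi g) <> 0, the polynomial q = Q (X - chi g) also
   kills g, while q'(chi g) = Q(chi g) <> 0; so D g = 0.  Hence D vanishes on the
   dense span F, and being bounded it vanishes on A. *)

Lemma idem_eq0_or1 (F : idomainType) (e : F) : e * e = e -> e = 0 \/ e = 1.
Proof.
move=> ee; have /eqP : e * (e - 1) = 0 by rewrite mulrBr ee mulr1 subrr.
by rewrite mulf_eq0 subr_eq0 => /orP [/eqP|/eqP]; [left|right].
Qed.

Section FunctionOps.
Variables (R : realType) (X : Type).
Local Notation C := (R[i]).
Local Notation FX := (X -> C).

Definition fhorner (p : {poly C}) (g : FX) : FX := fun x => p.[g x].

Lemma fcstZ (c : C) : fcst c = fscale c (fcst 1 : FX).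
Proof. by apply: functional_extensionality => x; rewrite /fscale /fcst mulr1. Qed.

Lemma fmulf1 (f : FX) : fmul f (fcst 1) = f.
Proof. by apply: functional_extensionality => x; rewrite /fmul /fcst mulr1. Qed.

Lemma fsubE (f g : FX) : fsub f g = fadd f (fscale (-1) g).
Proof. by apply: functional_extensionality => x; rewrite /fadd /fscale mulN1r. Qed.

Lemma fhorner0 (g : FX) : fhorner 0 g = fcst 0.
Proof. by apply: functional_extensionality => x; rewrite /fhorner horner0. Qed.

Lemma fhornerMXaddC (p : {poly C}) (c : C) (g : FX) :
  fhorner (p * 'X + c%:P) g = fadd (fmul (fhorner p g) g) (fcst c).
Proof. by apply: functional_extensionality => x; rewrite /fhorner hornerMXaddC. Qed.

Lemma fhorner_eq0 (p : {poly C}) (g : FX) :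
  (forall x, root p (g x)) -> fhorner p g = fcst 0.
Proof. by move=> pg; apply: functional_extensionality => x; apply/eqP/pg. Qed.

Lemma flincomb0 (c : 'I_0 -> C) (g : 'I_0 -> FX) :
  (fun x => \sum_(i < 0) c i * g i x) = fcst 0.
Proof. by apply: functional_extensionality => x; rewrite big_ord0. Qed.

Lemma flincomb_recl n (c : 'I_n.+1 -> C) (g : 'I_n.+1 -> FX) :
  (fun x => \sum_(i < n.+1) c i * g i x) =
  fadd (fun x => \sum_(i < n) c (lift ord0 i) * g (lift ord0 i) x)
       (fscale (c ord0) (g ord0)).
Proof. by apply: functional_extensionality => x; rewrite big_ord_recl addrC. Qed.

End FunctionOps.

Section LinearFunctional.
Variables (R : realType) (X : Type) (SA : (X -> R[i]) -> Prop) (L : (X -> R[i]) -> R[i]).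
Hypothesis SA_cst : forall c, SA (fcst c).
Hypothesis SA_add : forall f g, SA f -> SA g -> SA (fadd f g).
Hypothesis SA_scale : forall c f, SA f -> SA (fscale c f).
Hypothesis L_lin : lin_functional SA L.

Lemma lin_functional_cst c : L (fcst c) = c * L (fcst 1).
Proof. by rewrite fcstZ L_lin.2. Qed.

Lemma lin_functional_sub f g : SA f -> SA g -> L (fsub f g) = L f - L g.
Proof.
by move=> Sf Sg; rewrite fsubE L_lin.1 ?L_lin.2 ?mulN1r; auto.
Qed.

Lemma SA_lincomb n (c : 'I_n -> R[i]) (g : 'I_n -> X -> R[i]) :
  (forall i, SA (g i)) -> SA (fun x => \sum_(i < n) c i * g i x).
Proof.
elim: n c g => [|n IH] c g Sg; first by rewrite flincomb0.
by rewrite flincomb_recl; apply: SA_add; [apply: IH | apply: SA_scale].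
Qed.

Lemma lin_functional_lincomb n (c : 'I_n -> R[i]) (g : 'I_n -> X -> R[i]) :
  (forall i, SA (g i)) ->
  L (fun x => \sum_(i < n) c i * g i x) = \sum_(i < n) c i * L (g i).
Proof.
elim: n c g => [|n IH] c g Sg.
  by rewrite flincomb0 lin_functional_cst mul0r big_ord0.
rewrite flincomb_recl L_lin.1 ?L_lin.2 ?IH ?big_ord_recl 1?addrC //.
  exact: SA_lincomb.
exact: SA_scale.
Qed.

End LinearFunctional.

Lemma bounded_lin_functional_eq0_of_dense (R : realType) (X : Type)
    (SA F : (X -> R[i]) -> Prop) (N : (X -> R[i]) -> R) (L : (X -> R[i]) -> R[i]) :
  (forall f g, SA f -> SA g -> SA (fadd f g)) ->
  (forall c f, SA f -> SA (fscale c f)) ->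
  (forall f, SA f -> 0 <= N f) ->
  bounded_lin_functional SA N L ->
  (forall h, F h -> SA h /\ L h = 0) ->
  dense_in SA F N ->
  forall f, SA f -> L f = 0.
Proof.
move=> SA_add SA_scale N_ge0 [L_lin [M LM]] LF F_dense f Sf.
apply: Normc.eq0_normc; apply/eqP; rewrite eq_le; apply/andP; split; last first.
  by case: (L f) => a b; rewrite sqrtr_ge0.
apply/ler_addgt0Pr => e e_gt0; rewrite add0r.
have K_gt0 : 0 < `|M| + 1 by rewrite ltr_wpDl.
have [h Fh Nfh] := F_dense f Sf (e / (`|M| + 1)) (divr_gt0 e_gt0 K_gt0).
have [Sh Lh] := LF h Fh.
have Sfh : SA (fsub f h) by rewrite fsubE; auto.
have <- : L (fsub f h) = L f by rewrite (lin_functional_sub SA_scale L_lin) // Lh subr0.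
apply: (le_trans (LM _ Sfh)); apply: (@le_trans _ _ ((`|M| + 1) * N (fsub f h))).
  by rewrite ler_wpM2r ?N_ge0 // (le_trans (ler_norm M)) // lerDl.
by rewrite -ler_pdivlMl // mulrC ltW.
Qed.

Section PointDerivation.
Variables (R : realType) (X : Type) (SA : (X -> R[i]) -> Prop).
Variables (chi D : (X -> R[i]) -> R[i]).
Hypothesis SA_cst : forall c, SA (fcst c).
Hypothesis SA_add : forall f g, SA f -> SA g -> SA (fadd f g).
Hypothesis SA_scale : forall c f, SA f -> SA (fscale c f).
Hypothesis SA_mul : forall f g, SA f -> SA g -> SA (fmul f g).
Hypothesis chi_lin : lin_functional SA chi.
Hypothesis chiM : forall f g, SA f -> SA g -> chi (fmul f g) = chi f * chi g.
Hypothesis D_lin : lin_functional SA D.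
Hypothesis D_der : forall f g, SA f -> SA g ->
  D (fmul f g) = chi f * D g + chi g * D f.

Lemma chi1_eq0_or1 : chi (fcst 1) = 0 \/ chi (fcst 1) = 1.
Proof. by apply: idem_eq0_or1; rewrite -chiM // fmulf1. Qed.

Lemma derivation_eq0_of_chi1_eq0 : chi (fcst 1) = 0 -> forall f, SA f -> D f = 0.
Proof.
move=> chi1 f Sf.
have chif : chi f = 0 by rewrite -(fmulf1 f) chiM // chi1 mulr0.
by rewrite -(fmulf1 f) D_der // chif chi1 !mul0r addr0.
Qed.

Section UnitalCharacter.
Hypothesis chi1 : chi (fcst 1) = 1.

Lemma chi_cst c : chi (fcst c) = c.
Proof. by rewrite (lin_functional_cst SA_cst chi_lin) chi1 mulr1. Qed.

Lemma derivation_cst c : D (fcst c) = 0.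
Proof.
have D1 : D (fcst 1) = 0.
  have := D_der (SA_cst 1) (SA_cst 1); rewrite fmulf1 chi1 !mul1r.
  by rewrite -{1}(addr0 (D (fcst 1))) => /addrI <-.
by rewrite (lin_functional_cst SA_cst D_lin) D1 mulr0.
Qed.

Lemma SA_fhorner p g : SA g -> SA (fhorner p g).
Proof.
move=> Sg; elim/poly_ind: p => [|p c IH]; first by rewrite fhorner0.
by rewrite fhornerMXaddC; auto.
Qed.

Lemma chi_fhorner p g : SA g -> chi (fhorner p g) = p.[chi g].
Proof.
move=> Sg; elim/poly_ind: p => [|p c IH]; first by rewrite fhorner0 chi_cst horner0.
rewrite fhornerMXaddC chi_lin.1 ?chiM ?chi_cst ?IH ?hornerMXaddC //;
  auto using SA_fhorner.
Qed.

Lemma derivation_fhorner p g : SA g -> D (fhorner p g) = p^`().[chi g] * D g.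
Proof.
move=> Sg; elim/poly_ind: p => [|p c IH].
  by rewrite fhorner0 derivation_cst deriv0 horner0 mul0r.
rewrite fhornerMXaddC D_lin.1 ?D_der ?derivation_cst ?chi_fhorner ?IH //;
  auto using SA_fhorner.
rewrite derivMXaddC hornerD hornerMX addr0 mulrDl; congr (_ + _).
by rewrite mulrCA mulrA.
Qed.

Lemma derivation_poly_annihilated g : SA g -> poly_annihilated g -> D g = 0.
Proof.
move=> Sg [P P_neq0 Pg]; set a := chi g.
have [m [Q]] := multiplicity_XsubC P a; rewrite P_neq0 /= => Qa defP.
pose q := Q * ('X - a%:P).
have qg : fhorner q g = fcst 0.
  apply: fhorner_eq0 => x; have /rootP := Pg x.
  rewrite defP rootM /q rootM root_XsubC => /orP [-> //|].
  by rewrite /root horner_exp expf_eq0 hornerXsubC subr_eq0 => /andP [_ ->]; rewrite orbT.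
have := derivation_fhorner q Sg; rewrite qg derivation_cst.
rewrite derivM derivXsubC mulr1 hornerD hornerM hornerXsubC subrr mulr0 add0r.
by move=> /esym/eqP; rewrite mulf_eq0 -[Q.[a] == 0]/(root Q a) (negbTE Qa) => /eqP.
Qed.

End UnitalCharacter.

Lemma derivation_alg_span h : in_alg_span SA h -> SA h /\ D h = 0.
Proof.
move=> [n [c [g [Sg ->]]]]; have Sg' i : SA (g i) := (Sg i).1.
split; first exact: SA_lincomb.
have [chi1|chi1] := chi1_eq0_or1.
  by apply: derivation_eq0_of_chi1_eq0 => //; exact: SA_lincomb.
rewrite (lin_functional_lincomb SA_cst SA_add SA_scale D_lin) //.
by apply: big1 => i _; rewrite derivation_poly_annihilated ?mulr0 //; case: (Sg i).
Qed.

End PointDerivation.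

Lemma lin_functional_comp (R : realType) (X : Type) (SA SB : (X -> R[i]) -> Prop)
    (psi : (X -> R[i]) -> X -> R[i]) (L : (X -> R[i]) -> R[i]) :
  alg_hom SA SB psi -> lin_functional SB L -> lin_functional SA (fun f => L (psi f)).
Proof.
move=> [psiS psiD psiZ _] [LD LZ]; split=> [f g Sf Sg|c f Sf].
  by rewrite psiD // LD; auto.
by rewrite psiZ // LZ; auto.
Qed.

Lemma multiplicative_comp (R : realType) (X : Type) (SA SB : (X -> R[i]) -> Prop)
    (psi : (X -> R[i]) -> X -> R[i]) (L : (X -> R[i]) -> R[i]) :
  alg_hom SA SB psi ->
  (forall f g, SB f -> SB g -> L (fmul f g) = L f * L g) ->
  forall f g, SA f -> SA g -> L (psi (fmul f g)) = L (psi f) * L (psi g).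
Proof. by move=> [psiS _ _ psiM] LM f g Sf Sg; rewrite psiM // LM; auto. Qed.

Theorem corollary2p6 (R : realType) (X : Type)
    (SA SB : (X -> R[i]) -> Prop) (NA NB : (X -> R[i]) -> R)
    (psi : (X -> R[i]) -> (X -> R[i])) (phi : (X -> R[i]) -> R[i]) :
  fun_banach_algebra SA NA ->
  fun_banach_algebra SB NB ->
  alg_hom SA SB psi ->
  continuous_on_fa SA NA NB psi ->
  in_Delta SB phi ->
  dense_in SA (in_alg_span SA) NA ->
  forall D : (X -> R[i]) -> R[i],
    point_derivation SA NA phi psi D -> forall f, SA f -> D f = 0.
Proof.
move=> [SA_cst [SA_add [SA_scale [SA_mul [NA_ge0 _]]]]] _ psi_hom _.
move=> [phi_lin phiM _] F_dense D [D_bounded D_der].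
have chi_lin := lin_functional_comp psi_hom phi_lin.
have chiM := multiplicative_comp psi_hom phiM.
have D_span := derivation_alg_span SA_cst SA_add SA_scale SA_mul chi_lin chiM D_bounded.1 D_der.
exact: bounded_lin_functional_eq0_of_dense SA_add SA_scale NA_ge0 D_bounded D_span F_dense.
Qed.
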